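(* Let $n\ge3$, suppose the generator is $\pi_{\mathrm{gen}}=\pi_{\mathrm{target}}$, and assume rewards lie in $[0,R]$. In the infinite-block-length setting, the sequential Monte Carlo policies satisfy $$\mathbb{E}_{N\sim\mathrm{Poi}(n)|_{>0}}[D_{\mathrm{KL}}(\hat\pi_N\|\pi^\star_\beta)]\le\widetilde{\mathcal{O}}_n\!\left(\frac{e^{2\beta R}}{n^2}\right),$$ and for every fixed $n\ge3$, $$D_{\mathrm{KL}}(\hat\pi_n\|\pi^\star_\beta)\le\widetilde{\mathcal{O}}_n\!\left(\frac{e^{2\beta R}}{n^{3/2}}\right).$$
   Context: Prompts $x$ drawn from $\rho$; $\pi_{\mathrm{target}}$ is a (full-support) conditional distribution over full responses, $r(y|x)\in[0,R]$, $\beta>0$, $\pi^\star_\beta(y|x)\propto\pi_{\mathrm{target}}(y|x)e^{\beta r(y|x)}$. With $\phi_\beta(y|x)=\frac{\pi_{\mathrm{target}}(y|x)}{\pi_{\mathrm{gen}}(y|x)}e^{\beta r(y|x)}$, sequential Monte Carlo with $N$ particles draws $Y_1,\dots,Y_N$ i.i.d. from $\pi_{\mathrm{gen}}(\cdot|x)$ and outputs $Y_i$ with probability $\phi_\beta(Y_i|x)/\sum_j\phi_\beta(Y_j|x)$; $\hat\pi_N$ is its output distribution. $\mathrm{Poi}(n)|_{>0}$ is Poisson with mean $n$ conditioned on being positive. $D_{\mathrm{KL}}(\pi_1\|\pi_2)=\mathbb{E}_{x\sim\rho}D_{\mathrm{KL}}(\pi_1(\cdot|x)\|\pi_2(\cdot|x))$.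 $\widetilde{\mathcal{O}}_n$ hides constants and polylog factors in $n$. *)

(* Discrete (countably supported) distributions,
   sums are [esum] over arbitrary choice types. *)
From mathcomp Require Import all_boot all_order all_algebra.
From mathcomp Require Import all_classical all_reals all_analysis.
Set Implicit Arguments. Unset Strict Implicit. Unset Printing Implicit Defensive.
Import Order.TTheory GRing.Theory Num.Theory.
Local Open Scope classical_set_scope.
Local Open Scope ring_scope.

Section SMC.
Variable R : realType.

Definition is_distr (T : choiceType) (p : T -> R) : Prop :=
  (forall t, 0 <= p t) /\ (\esum_(t in [set: T]) (p t)%:E = 1)%E.

Definition esumR (T : choiceType) (f : T -> R) : R :=
  fine (\esum_(t in [set: T]) (f t)%:E).

Definition KL (Y : choiceType) (p q : Y -> R) : \bar R :=
  ((\esum_(y in [set: Y]) (Num.max (p y * ln (p y / q y)) 0)%:E)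
   - (\esum_(y in [set: Y]) (Num.max (- (p y * ln (p y / q y))) 0)%:E))%E.

Definition KLcond (X Y : choiceType) (rho : X -> R) (p q : X -> Y -> R) : \bar R :=
  (\esum_(x in [set: X]) ((rho x)%:E * KL (p x) (q x)))%E.

Definition tilted (X Y : choiceType) (pit : X -> Y -> R) (r : X -> Y -> R)
  (beta : R) (x : X) (y : Y) : R :=
  pit x y * expR (beta * r x y) / esumR (fun y' => pit x y' * expR (beta * r x y')).

Definition phi (X Y : choiceType) (pit pig r : X -> Y -> R) (beta : R)
  (x : X) (y : Y) : R :=
  pit x y / pig x y * expR (beta * r x y).

(* output distribution of SMC with N particles (infinite block length):
   Y_1..Y_N iid ~ pi_gen(.|x), output Y_i w.p. phi(Y_i)/sum_j phi(Y_j). *)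
Definition smc_out (X Y : choiceType) (pit pig r : X -> Y -> R) (beta : R)
  (N : nat) (x : X) (y : Y) : R :=
  esumR (fun s : N.-tuple Y =>
    (\prod_(i < N) pig x (tnth s i)) *
    ((\sum_(i < N) (tnth s i == y)%:R * phi pit pig r beta x (tnth s i))
     / (\sum_(j < N) phi pit pig r beta x (tnth s j)))).

Definition poi_pos (n N : nat) : R :=
  expR (- n%:R) * n%:R ^+ N / (N`!)%:R / (1 - expR (- n%:R)).

Definition poi_KL (X Y : choiceType) (rho : X -> R) (pit pig r : X -> Y -> R)
  (beta : R) (n : nat) : \bar R :=
  (\esum_(N in [set N : nat | (0 < N)%N])
     ((poi_pos n N)%:E *
      KLcond rho (smc_out pit pig r beta N) (tilted pit r beta)))%E.

End SMC.

From mathcomp Require Import all_boot all_order all_algebra.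
From mathcomp Require Import all_classical all_reals all_analysis.
From mathcomp Require Import ring lra.
Set Implicit Arguments. Unset Strict Implicit. Unset Printing Implicit Defensive.
Import Order.TTheory GRing.Theory Num.Theory.
Local Open Scope classical_set_scope.
Local Open Scope ring_scope.

(* With pi_gen = pi_target the SMC weights are w = e^(beta r), with 1 <= w <= M := e^(beta R).
   Since the particles are exchangeable, N = m+1 particles output y with probability
   q(y) = N p(y) w(y) E[1 / (w(y) + S_m)], where S_m is the total weight of m i.i.d. particles,
   while pi*_beta(y) = p(y) w(y) / Z with Z = E w.  The ratio
   g = q / pi*_beta = N Z E[1 / (w(y) + S_m)]
   satisfies 1 - M/N <= g (Jensen) and g <= 1 + 3M/N (the tangent line of 1/x at E(w(y) + S_m),
   whose error is controlled by Var S_m = m Var w).  Hence chi^2(q || pi*_beta) <= 9 M^2 / N^2 and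
   KL <= 2 chi^2 <= 18 e^(2 beta R) / N^2, which gives the fixed-n bound since n^(3/2) <= n^2.
   Averaging 1/N^2 against Poi(n) conditioned on N > 0 costs 12 / n^2, by
   1/N^2 <= 6/((N+1)(N+2)) and the exponential series. *)

Section ExtendedSums.
Variable R : realType.

Lemma esumZl (T : choiceType) (S : set T) (r : R) (f : T -> R) : 0 <= r ->
  (\esum_(i in S) (r * f i)%:E = r%:E * \esum_(i in S) (f i)%:E)%E.
Proof.
move=> r0; rewrite /esum -ereal_supZl //; last first.
  by apply/set0P; exists 0%E; exists set0; [exact: fsets_set0 | rewrite fsbig_set0].
congr ereal_sup; apply/seteqP; split => x /=.
  move=> [A [finA AS] <-]; exists (\sum_(i \in A) (f i)%:E)%E; first by exists A.
  by rewrite !fsumEFin // -EFinM mulr_fsumr.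
move=> [y [A [finA AS] <-] <-]; exists A => //.
by rewrite !fsumEFin // -EFinM mulr_fsumr.
Qed.

Lemma esum_eq_mul (T : choiceType) (t0 : T) (c : R) : 0 <= c ->
  (\esum_(t in [set: T]) ((t0 == t)%:R * c)%:E = c%:E)%E.
Proof.
move=> c0; rewrite (esumID [set t0]); last first.
  by move=> t _; rewrite lee_fin mulr_ge0 //; case: (t0 == t).
rewrite setTI esum_set1; last by rewrite lee_fin eqxx mul1r.
rewrite eqxx mul1r esum1 ?adde0 // => t [_ /eqP] nt.
by rewrite eq_sym (negbTE nt) mul0r.
Qed.

Lemma bounded_fineK (x : \bar R) (B : R) : (0 <= x)%E -> (x <= B%:E)%E -> (fine x)%:E = x.
Proof. by case: x. Qed.

End ExtendedSums.

Definition nng_bounded (R : realType) (T : Type) (F : T -> R) :=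
  exists2 B, 0 <= B & forall t, 0 <= F t <= B.

Section DiscreteExpectation.
Variables (R : realType) (T : choiceType) (q : T -> R).
Hypothesis q_distr : is_distr q.

Implicit Types (F G : T -> R) (c B : R).

Let q_ge0 t : 0 <= q t. Proof. exact: q_distr.1. Qed.

Definition eexpect (F : T -> R) : \bar R := (\esum_(t in [set: T]) (q t * F t)%:E)%E.

(* [fine] sends +oo to 0, so [expect] is only meaningful (and linear) on functions with a finite
   expectation, such as the [nng_bounded] ones. *)
Definition expect (F : T -> R) : R := fine (eexpect F).

Lemma eq_expect (F G : T -> R) : (forall t, F t = G t) -> expect F = expect G.
Proof. by move=> FG; congr expect; apply/funext. Qed.

Lemma nng_bounded_ge0 F : nng_bounded F -> forall t, 0 <= F t.
Proof. by move=> [B _ FB] t; case/andP: (FB t). Qed.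

Lemma nng_bounded_cst c : 0 <= c -> nng_bounded (fun _ : T => c).
Proof. by move=> c0; exists c => // t; rewrite c0 lexx. Qed.

Lemma nng_boundedD F G : nng_bounded F -> nng_bounded G -> nng_bounded (fun t => F t + G t).
Proof.
move=> [B B0 FB] [C C0 GC]; exists (B + C); first exact: addr_ge0.
move=> t; case/andP: (FB t) => ? ?; case/andP: (GC t) => ? ?.
by rewrite addr_ge0 //= lerD.
Qed.

Lemma nng_boundedZl c F : 0 <= c -> nng_bounded F -> nng_bounded (fun t => c * F t).
Proof.
move=> c0 [B B0 FB]; exists (c * B); first exact: mulr_ge0.
by move=> t; case/andP: (FB t) => ? ?; rewrite mulr_ge0 //= ler_wpM2l.
Qed.

Lemma nng_bounded_sum k (F : 'I_k -> T -> R) : (forall i, nng_bounded (F i)) ->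
  nng_bounded (fun t => \sum_(i < k) F i t).
Proof.
elim: k F => [|k IH] F bF; first by exists 0 => // t; rewrite big_ord0 lexx.
under [X in nng_bounded X]funext do rewrite big_ord_recr.
by apply: nng_boundedD => //; apply: IH.
Qed.

Lemma eexpect_ge0 F : (forall t, 0 <= F t) -> (0 <= eexpect F)%E.
Proof. by move=> F0; apply: esum_ge0 => t _; rewrite lee_fin mulr_ge0. Qed.

Lemma le_eexpect F G : (forall t, F t <= G t) -> (eexpect F <= eexpect G)%E.
Proof. by move=> FG; apply: le_esum => t _; rewrite lee_fin ler_wpM2l. Qed.

Lemma eexpect_cst c : 0 <= c -> eexpect (fun=> c) = c%:E.
Proof.
move=> c0; rewrite /eexpect; under eq_esum do rewrite mulrC.
by rewrite esumZl // q_distr.2 mule1.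
Qed.

Lemma eexpectD F G : (forall t, 0 <= F t) -> (forall t, 0 <= G t) ->
  eexpect (fun t => F t + G t) = (eexpect F + eexpect G)%E.
Proof.
move=> F0 G0; rewrite /eexpect -esumD; last 2 first.
- by move=> t _; rewrite lee_fin mulr_ge0.
- by move=> t _; rewrite lee_fin mulr_ge0.
by apply: eq_esum => t _; rewrite mulrDr.
Qed.

Lemma eexpectZl c F : 0 <= c -> eexpect (fun t => c * F t) = (c%:E * eexpect F)%E.
Proof. by move=> c0; rewrite /eexpect -esumZl //; apply: eq_esum => t _; rewrite mulrCA. Qed.

Lemma eexpectE F : nng_bounded F -> eexpect F = (expect F)%:E.
Proof.
move=> [B B0 FB]; rewrite /expect (@bounded_fineK _ _ B) //.
  by apply: eexpect_ge0 => t; case/andP: (FB t).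
by rewrite -(eexpect_cst B0); apply: le_eexpect => t; case/andP: (FB t).
Qed.

Lemma expect_cst c : 0 <= c -> expect (fun=> c) = c.
Proof. by move=> c0; rewrite /expect eexpect_cst. Qed.

Lemma expectD F G : nng_bounded F -> nng_bounded G ->
  expect (fun t => F t + G t) = expect F + expect G.
Proof.
move=> bF bG.
by rewrite /expect eexpectD ?(eexpectE bF) ?(eexpectE bG) //; exact: nng_bounded_ge0.
Qed.

Lemma expectZl c F : 0 <= c -> nng_bounded F -> expect (fun t => c * F t) = c * expect F.
Proof. by move=> c0 bF; rewrite /expect eexpectZl // (eexpectE bF). Qed.

Lemma le_expect F G : nng_bounded F -> nng_bounded G -> (forall t, F t <= G t) ->
  expect F <= expect G.
Proof. by move=> bF bG FG; rewrite -lee_fin -(eexpectE bF) -(eexpectE bG) le_eexpect. Qed.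

Lemma expect_ge0 F : nng_bounded F -> 0 <= expect F.
Proof.
move=> bF; rewrite -(expect_cst (lexx 0)) le_expect //; first exact: nng_bounded_cst.
exact: nng_bounded_ge0.
Qed.

Lemma expect_le F B : nng_bounded F -> (forall t, F t <= B) -> 0 <= B -> expect F <= B.
Proof.
by move=> bF FB B0; rewrite -[leRHS](expect_cst B0) le_expect //; exact: nng_bounded_cst.
Qed.

Lemma expect_sum k (F : 'I_k -> T -> R) : (forall i, nng_bounded (F i)) ->
  expect (fun t => \sum_(i < k) F i t) = \sum_(i < k) expect (F i).
Proof.
elim: k F => [|k IH] F bF.
  by rewrite big_ord0 -[RHS](expect_cst (lexx 0)); apply: eq_expect => t; rewrite big_ord0.
under eq_expect do rewrite big_ord_recr.
by rewrite expectD ?IH ?big_ord_recr //; exact: nng_bounded_sum.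
Qed.

Lemma distr_setT_neq0 : [set: T] != set0.
Proof.
apply/eqP => T0; have := q_distr.2; rewrite T0 esum_set0 => /(congr1 fine) /=.
by move=> /eqP; rewrite eq_sym oner_eq0.
Qed.

Lemma expect_indicator (t0 : T) h : nng_bounded h ->
  expect (fun t => (t == t0)%:R * h t) = q t0 * h t0.
Proof.
move=> bh; have h0 := nng_bounded_ge0 bh.
have i0 t : 0 <= (t == t0)%:R * h t by rewrite mulr_ge0 //; case: (t == t0).
rewrite /expect /eexpect (esumID [set t0]); last by move=> t _; rewrite lee_fin mulr_ge0.
rewrite setTI esum_set1; last by rewrite lee_fin mulr_ge0.
rewrite esum1 ?adde0 /= ?eqxx ?mul1r // => t [_ /eqP nt].
by rewrite (negbTE nt) mul0r mulr0.
Qed.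

Lemma nng_bounded_expect (U : choiceType) (F : U -> T -> R) B : 0 <= B ->
  (forall u t, 0 <= F u t <= B) -> nng_bounded (fun u => expect (F u)).
Proof.
move=> B0 FB; have bF u : nng_bounded (F u) by exists B.
by exists B => // u; rewrite expect_ge0 //= expect_le // => t; case/andP: (FB u t).
Qed.

End DiscreteExpectation.

Section ProductPmf.
Variables (R : realType) (Y : choiceType) (p : Y -> R).
Hypothesis p_distr : is_distr p.

Let p_ge0 y : 0 <= p y. Proof. exact: p_distr.1. Qed.

Definition prod_pmf N (s : N.-tuple Y) : R := \prod_(i < N) p (tnth s i).

Lemma prod_pmf_ge0 N (s : N.-tuple Y) : 0 <= prod_pmf s.
Proof. exact: prodr_ge0. Qed.

Lemma prod_pmf_cons m t (s : m.-tuple Y) : prod_pmf [tuple of t :: s] = p t * prod_pmf s.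
Proof.
rewrite /prod_pmf big_ord_recl tnth0; congr (_ * _).
by apply: eq_bigr => i _; rewrite tnthS.
Qed.

Lemma eexpect_prod_pmf_cons m (F : m.+1.-tuple Y -> R) : (forall s, 0 <= F s) ->
  eexpect (@prod_pmf m.+1) F =
  (\esum_(t in [set: Y]) ((p t)%:E * eexpect (@prod_pmf m) (fun s => F [tuple of t :: s])))%E.
Proof.
move=> F0; rewrite /eexpect.
rewrite (reindex_esum [set: Y * m.-tuple Y] _ (fun ts => [tuple of ts.1 :: ts.2])); last first.
  rewrite setTT_bijective.
  exists (fun s : m.+1.-tuple Y => (thead s, [tuple of behead s])).
    by case=> t s /=; rewrite theadE; congr pair; apply: val_inj.
  by move=> s /=; rewrite [RHS]tuple_eta.
rewrite (_ : [set: Y * m.-tuple Y] = [set: Y] `*`` (fun _ => [set: m.-tuple Y])); last first.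
  by apply/seteqP; split => -[].
rewrite -(@esum_esum _ _ _ [set: Y] (fun _ => [set: m.-tuple Y])
  (fun t s => (prod_pmf [tuple of t :: s] * F [tuple of t :: s])%:E)); last first.
  by move=> t s _ _; rewrite lee_fin mulr_ge0 // prod_pmf_ge0.
apply: eq_esum => t _; rewrite -esumZl //; apply: eq_esum => s _.
by rewrite prod_pmf_cons mulrA.
Qed.

Lemma prod_pmf_distr N : is_distr (@prod_pmf N).
Proof.
split; first exact: prod_pmf_ge0.
have -> : (\esum_(s in [set: N.-tuple Y]) (prod_pmf s)%:E =
           eexpect (@prod_pmf N) (fun=> 1%R))%E.
  by apply: eq_esum => s _; rewrite mulr1.
elim: N => [|m IH].
  rewrite /eexpect (_ : [set: 0.-tuple Y] = [set [tuple]]); last first.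
    by apply/seteqP; split => s //= _; rewrite tuple0.
  by rewrite esum_set1 /prod_pmf big_ord0 ?mul1r.
rewrite eexpect_prod_pmf_cons // -p_distr.2; apply: eq_esum => t _.
by rewrite IH mule1.
Qed.

Lemma nng_bounded_cons m (F : m.+1.-tuple Y -> R) t :
  nng_bounded F -> nng_bounded (fun s : m.-tuple Y => F [tuple of t :: s]).
Proof. by move=> [B B0 FB]; exists B. Qed.

Lemma expect_prod_pmf_cons m (F : m.+1.-tuple Y -> R) : nng_bounded F ->
  expect (@prod_pmf m.+1) F =
  expect p (fun t => expect (@prod_pmf m) (fun s => F [tuple of t :: s])).
Proof.
move=> bF; rewrite /expect eexpect_prod_pmf_cons; last exact: nng_bounded_ge0.
congr fine; apply: eq_esum => t _.
by rewrite (eexpectE (prod_pmf_distr m) (nng_bounded_cons t bF)).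
Qed.

End ProductPmf.

Arguments prod_pmf {R Y} p N s.

Section RealInequalities.
Variable R : realType.

Lemma ler_pdiv_cross (x y b d : R) : 0 < b -> 0 < d -> x * d <= y * b -> x / b <= y / d.
Proof. by move=> b0 d0; rewrite ler_pdivrMr // mulrAC ler_pdivlMr. Qed.

Lemma divr_ge1_bounds (c : R) : 0 <= c -> forall x, 1 <= x -> 0 <= c / x <= c.
Proof.
move=> c0 x x1; have x0 : 0 < x by apply: lt_le_trans x1.
apply/andP; split; first exact: divr_ge0 c0 (ltW x0).
by rewrite ler_pdivrMr // ler_peMr.
Qed.

Lemma inv_tangent_lb (K a : R) : 0 < K -> 0 < a -> 2 / a <= 1 / K + (a ^+ 2)^-1 * K.
Proof.
move=> K0 a0; rewrite -subr_ge0.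
have -> : 1 / K + (a ^+ 2)^-1 * K - 2 / a = (K - a) ^+ 2 / (a ^+ 2 * K).
  by field; rewrite !gt_eqF.
by rewrite divr_ge0 ?sqr_ge0 ?mulr_ge0 ?sqr_ge0 ?ltW.
Qed.

Lemma inv_tangent_ub (K a L : R) : 0 < L -> L <= K -> 0 < a ->
  1 / K + (a ^+ 2)^-1 * K <= 2 / a + ((a ^+ 2)^-1 / L) * (K - a) ^+ 2.
Proof.
move=> L0 LK a0; have K0 : 0 < K by apply: lt_le_trans LK.
rewrite -subr_ge0.
have -> : 2 / a + ((a ^+ 2)^-1 / L) * (K - a) ^+ 2 - (1 / K + (a ^+ 2)^-1 * K) =
   (K - a) ^+ 2 * (K - L) / (a ^+ 2 * L * K).
  by field; rewrite !gt_eqF.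
apply: divr_ge0; first by apply: mulr_ge0; [exact: sqr_ge0| rewrite subr_ge0].
by apply: mulr_ge0; [apply: mulr_ge0; [exact: sqr_ge0|exact: ltW] | exact: ltW].
Qed.

Lemma scaled_inv_lb (m v Z M mu : R) : 0 <= m -> 1 <= v <= M -> 1 <= Z <= M ->
  1 / (v + m * Z) <= mu -> 1 - M / (m + 1) <= (m + 1) * Z * mu.
Proof.
move=> m0 /andP[v1 vM] /andP[Z1 ZM] hmu.
have a0 : 0 < v + m * Z by nra.
have N0 : 0 < m + 1 by lra.
apply: (le_trans (y := (m + 1) * Z / (v + m * Z))); last first.
  by apply: ler_wpM2l; [nra | rewrite -div1r].
rewrite (_ : 1 - M / (m + 1) = (m + 1 - M) / (m + 1)); last by field; rewrite gt_eqF.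
apply: ler_pdiv_cross => //.
have h1 : v <= M * v by rewrite -[X in X <= _]mul1r; apply: ler_wpM2r; lra.
have h2 : m * v <= m * M * Z.
  apply: (le_trans (ler_wpM2l m0 vM)); rewrite -[X in X <= _]mulr1.
  by apply: ler_wpM2l; [exact: mulr_ge0 m0 (le_trans ler01 (le_trans v1 vM)) | lra].
nra.
Qed.

Lemma scaled_inv_main_ub (m v Z M : R) : 0 <= m -> 1 <= v <= M -> 1 <= Z <= M ->
  (m + 1) * Z / (v + m * Z) <= 1 + M / (m + 1).
Proof.
move=> m0 /andP[v1 vM] /andP[Z1 ZM].
have a0 : 0 < v + m * Z by nra.
have N0 : 0 < m + 1 by lra.
rewrite (_ : 1 + M / (m + 1) = (m + 1 + M) / (m + 1)); last by field; rewrite gt_eqF.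
apply: ler_pdiv_cross => //.
have h1 : Z <= M * v by apply: (le_trans ZM); rewrite -[X in X <= _]mulr1 ler_wpM2l //; lra.
have h2 : m * Z <= m * M * Z.
  by rewrite -mulrA ler_wpM2l // -[X in X <= _]mul1r ler_wpM2r //; lra.
nra.
Qed.

Lemma scaled_variance_ub (m : nat) (v Z M W2 : R) : 1 <= v <= M -> 1 <= Z <= M ->
  W2 <= M * Z ->
  (m%:R + 1) * Z * (m%:R * (W2 - Z ^+ 2) / ((v + m%:R * Z) ^+ 2 * (v + m%:R)))
    <= 2 * M / (m%:R + 1).
Proof.
move=> /andP[v1 vM] /andP[Z1 ZM] W2M; set k : R := m%:R.
have k0 : 0 <= k by [].
have a0 : 0 < v + k * Z by nra.
have N0 : 0 < k + 1 by lra.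
rewrite mulrA; apply: ler_pdiv_cross => //; first by rewrite mulr_gt0 // ?exprn_gt0; lra.
have h0 : (k + 1) * Z * (k * (W2 - Z ^+ 2)) <= (k + 1) * Z * (k * (M * Z)).
  by apply: ler_wpM2l; [nra | apply: ler_wpM2l => //; nra].
apply: (le_trans (ler_wpM2r (ltW N0) h0)).
have hkz : 0 <= k * Z by nra.
have h3 : k ^+ 2 * Z ^+ 2 <= (v + k * Z) ^+ 2 by rewrite -exprMn lerXn2r ?nnegrE; lra.
have h5 : k ^+ 2 * Z ^+ 2 * (k + 1) <= (v + k * Z) ^+ 2 * (v + k).
  apply: (le_trans (ler_wpM2l _ (_ : k + 1 <= v + k))); [nra | lra |].
  by apply: ler_wpM2r; [lra | exact: h3].
apply: (le_trans _ (ler_wpM2l _ h5)); last lra.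
have [m0|m1] := eqVneq m 0%N; first by rewrite /k m0 mulr0n !(mul0r, mulr0, add0r); lra.
have k1 : 1 <= k by rewrite /k ler1n lt0n.
rewrite (_ : (k + 1) * Z * (k * (M * Z)) * (k + 1) =
  (k + 1) * (M * k * Z ^+ 2 * (k + 1))); last by ring.
rewrite (_ : 2 * M * (k ^+ 2 * Z ^+ 2 * (k + 1)) =
  (2 * k) * (M * k * Z ^+ 2 * (k + 1))); last by ring.
by apply: ler_wpM2r; [apply: mulr_ge0; [apply: mulr_ge0; [nra | exact: sqr_ge0] | lra] | lra].
Qed.

Lemma scaled_inv_ub (m : nat) (v Z M W2 mu : R) : 1 <= v <= M -> 1 <= Z <= M ->
  W2 <= M * Z ->
  mu <= 1 / (v + m%:R * Z) + m%:R * (W2 - Z ^+ 2) / ((v + m%:R * Z) ^+ 2 * (v + m%:R)) ->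
  (m%:R + 1) * Z * mu <= 1 + 3 * M / (m%:R + 1).
Proof.
move=> vM ZM W2M hmu; have /andP[v1 _] := vM; have /andP[Z1 _] := ZM.
have k0 : 0 <= m%:R :> R by [].
apply: (le_trans (ler_wpM2l _ hmu)); first by apply: mulr_ge0; lra.
rewrite mulrDr mulrA mulr1.
have -> : 1 + 3 * M / (m%:R + 1) = (1 + M / (m%:R + 1)) + 2 * M / (m%:R + 1).
  by field; rewrite natr1 pnatr_eq0.
by rewrite lerD ?scaled_inv_main_ub ?scaled_variance_ub.
Qed.

End RealInequalities.

Section Weights.
Variables (R : realType) (Y : choiceType) (p w : Y -> R) (M : R).
Hypothesis p_distr : is_distr p.
Hypothesis w_ge1 : forall t, 1 <= w t.
Hypothesis w_leM : forall t, w t <= M.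

Let w_ge0 t : 0 <= w t. Proof. exact: le_trans ler01 (w_ge1 t). Qed.

Let M_ge0 : 0 <= M.
Proof. by have /set0P[y _] := distr_setT_neq0 p_distr; exact: le_trans (w_ge0 y) (w_leM y). Qed.

Definition wsum N (s : N.-tuple Y) : R := \sum_(i < N) w (tnth s i).

Definition wmean : R := expect p w.

Definition wmean2 : R := expect p (fun t => w t ^+ 2).

Lemma wsum_cons m t (s : m.-tuple Y) : wsum [tuple of t :: s] = w t + wsum s.
Proof.
rewrite /wsum big_ord_recl tnth0; congr (_ + _).
by apply: eq_bigr => i _; rewrite tnthS.
Qed.

Lemma wsum_ge N (s : N.-tuple Y) : N%:R <= wsum s.
Proof.
have <- : \sum_(i < N) (1 : R) = N%:R by rewrite sumr_const card_ord.
exact: ler_sum.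
Qed.

Lemma wsum_ge0 N (s : N.-tuple Y) : 0 <= wsum s.
Proof. exact: le_trans (wsum_ge s). Qed.

Lemma wsum_le N (s : N.-tuple Y) : wsum s <= N%:R * M.
Proof.
have <- : \sum_(i < N) M = N%:R * M by rewrite sumr_const card_ord mulr_natl.
exact: ler_sum.
Qed.

Lemma nng_bounded_w : nng_bounded w.
Proof. by exists M => // t; rewrite w_ge0 w_leM. Qed.

Lemma nng_bounded_w2 : nng_bounded (fun t => w t ^+ 2).
Proof. by exists (M ^+ 2) => [|t]; rewrite ?sqr_ge0 //= lerXn2r ?nnegrE. Qed.

Lemma nng_bounded_wsum N : nng_bounded (@wsum N).
Proof. by exists (N%:R * M) => [|s]; rewrite ?mulr_ge0 // wsum_ge0 wsum_le. Qed.

Lemma nng_bounded_wsum2 N : nng_bounded (fun s : N.-tuple Y => wsum s ^+ 2).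
Proof.
exists ((N%:R * M) ^+ 2) => [|s]; first exact: sqr_ge0.
by rewrite sqr_ge0 /= lerXn2r ?nnegrE ?wsum_ge0 ?wsum_le ?mulr_ge0.
Qed.

Lemma wmean_ge1 : 1 <= wmean.
Proof.
rewrite -(expect_cst p_distr ler01) le_expect //; first exact: nng_bounded_cst.
exact: nng_bounded_w.
Qed.

Lemma wmean_leM : wmean <= M.
Proof. exact: (expect_le p_distr nng_bounded_w w_leM M_ge0). Qed.

Lemma wmean2_le : wmean2 <= M * wmean.
Proof.
rewrite /wmean -(expectZl p_distr M_ge0 nng_bounded_w).
apply: (le_expect p_distr nng_bounded_w2 (nng_boundedZl M_ge0 nng_bounded_w)) => t.
by rewrite expr2 ler_wpM2r.
Qed.

Lemma wmean_ge0 : 0 <= wmean.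
Proof. exact: le_trans ler01 wmean_ge1. Qed.

Lemma expect_wsum m : expect (prod_pmf p m) (@wsum m) = m%:R * wmean.
Proof.
elim: m => [|m IH].
  rewrite mul0r -[RHS](expect_cst (prod_pmf_distr p_distr 0) (lexx 0)).
  by apply: eq_expect => s; rewrite /wsum big_ord0.
have d := prod_pmf_distr p_distr m.
rewrite (expect_prod_pmf_cons p_distr (nng_bounded_wsum _)).
have mZ0 : 0 <= m%:R * wmean by rewrite mulr_ge0 // wmean_ge0.
rewrite (@eq_expect _ _ _ _ (fun t => w t + m%:R * wmean)); last first.
  move=> t; under eq_expect do rewrite wsum_cons.
  by rewrite (expectD d (nng_bounded_cst _ (w_ge0 t)) (nng_bounded_wsum _)) expect_cst ?IH.
rewrite (expectD p_distr nng_bounded_w (nng_bounded_cst _ mZ0)) expect_cst //.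
by rewrite -/wmean -natr1 mulrDl mul1r addrC.
Qed.

Lemma expect_wsum2 m : expect (prod_pmf p m) (fun s => wsum s ^+ 2) =
  m%:R * wmean2 + m%:R * (m%:R - 1) * wmean ^+ 2.
Proof.
elim: m => [|m IH].
  rewrite !mul0r addr0 -[RHS](expect_cst (prod_pmf_distr p_distr 0) (lexx 0)).
  by apply: eq_expect => s; rewrite /wsum big_ord0 expr0n.
have d := prod_pmf_distr p_distr m.
have h2 : 0 <= 2 * (m%:R * wmean) by rewrite mulr_ge0 ?mulr_ge0 ?wmean_ge0.
set V := m%:R * wmean2 + m%:R * (m%:R - 1) * wmean ^+ 2.
have V0 : 0 <= V by rewrite /V -IH; exact: (expect_ge0 d (nng_bounded_wsum2 _)).
rewrite (expect_prod_pmf_cons p_distr (nng_bounded_wsum2 _)).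
rewrite (@eq_expect _ _ _ _ (fun t => (w t ^+ 2 + 2 * (m%:R * wmean) * w t) + V)); last first.
  move=> t; have h2t : 0 <= 2 * w t by rewrite mulr_ge0.
  have hw2 : 0 <= w t ^+ 2 by rewrite sqr_ge0.
  have bA := nng_boundedD (nng_bounded_cst _ hw2) (nng_boundedZl h2t (nng_bounded_wsum m)).
  rewrite (@eq_expect _ _ _ _ (fun s => (w t ^+ 2 + 2 * w t * wsum s) + wsum s ^+ 2)); last first.
    by move=> s; rewrite wsum_cons; ring.
  rewrite (expectD d bA (nng_bounded_wsum2 _)).
  rewrite (expectD d (nng_bounded_cst _ hw2) (nng_boundedZl h2t (nng_bounded_wsum m))).
  by rewrite expect_cst // (expectZl d h2t (nng_bounded_wsum m)) IH expect_wsum /V; ring.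
have bA := nng_boundedD nng_bounded_w2 (nng_boundedZl h2 nng_bounded_w).
rewrite (expectD p_distr bA (nng_bounded_cst _ V0)).
rewrite (expectD p_distr nng_bounded_w2 (nng_boundedZl h2 nng_bounded_w)).
rewrite (expectZl p_distr h2 nng_bounded_w) expect_cst // -/wmean2 -/wmean /V -natr1; ring.
Qed.

Lemma nng_bounded_wsum_centered2 m :
  nng_bounded (fun s : m.-tuple Y => (wsum s - m%:R * wmean) ^+ 2).
Proof.
have mM0 : 0 <= m%:R * M by rewrite mulr_ge0.
exists (2 * (m%:R * M) ^+ 2) => [|s]; first by rewrite mulr_ge0 ?sqr_ge0.
have := wsum_ge0 s; have := wsum_le s.
have h3 : 0 <= m%:R * wmean by rewrite mulr_ge0 ?wmean_ge0.
have h4 : m%:R * wmean <= m%:R * M by rewrite ler_wpM2l ?wmean_leM.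
rewrite sqr_ge0 /=; nra.
Qed.

Lemma expect_wsum_centered2 m :
  expect (prod_pmf p m) (fun s => (wsum s - m%:R * wmean) ^+ 2) =
  m%:R * wmean2 - m%:R * wmean ^+ 2.
Proof.
have d := prod_pmf_distr p_distr m.
have h2 : 0 <= 2 * (m%:R * wmean) by rewrite mulr_ge0 ?mulr_ge0 ?wmean_ge0.
have hc : 0 <= (m%:R * wmean) ^+ 2 by rewrite sqr_ge0.
have E : expect (prod_pmf p m)
    (fun s => (wsum s - m%:R * wmean) ^+ 2 + 2 * (m%:R * wmean) * wsum s) =
  expect (prod_pmf p m) (fun s => wsum s ^+ 2 + (m%:R * wmean) ^+ 2).
  by apply: eq_expect => s; ring.
rewrite (expectD d (nng_bounded_wsum_centered2 m) (nng_boundedZl h2 (nng_bounded_wsum m))) in E.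
rewrite (expectD d (nng_bounded_wsum2 m) (nng_bounded_cst _ hc)) expect_cst // in E.
move: E; rewrite (expectZl d h2 (nng_bounded_wsum m)) expect_wsum2 expect_wsum => E.
by apply: (addIr (2 * (m%:R * wmean) * (m%:R * wmean))); rewrite E; ring.
Qed.

Definition smc_weight N (y : Y) (s : N.-tuple Y) : R :=
  (\sum_(i < N) (tnth s i == y)%:R * w (tnth s i)) / wsum s.

Definition smc_pmf N (y : Y) : R := expect (prod_pmf p N) (smc_weight y).

Section FixedOutcome.
Variable y : Y.

Definition mean_inv m : R := expect (prod_pmf p m) (fun s => 1 / (w y + wsum s)).

Lemma nng_bounded_comp_wsum N c (G : R -> R) B : 0 <= B -> (forall x, 1 <= x -> 0 <= G x <= B) ->
  1 <= c -> nng_bounded (fun s : N.-tuple Y => G (c + wsum s)).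
Proof.
move=> B0 GB c1; exists B => // s; apply: GB.
by rewrite -[1]addr0 lerD // wsum_ge0.
Qed.

Lemma nng_bounded_tnth_eq m (i : 'I_m.+1) (G : R -> R) B : 0 <= B ->
  (forall x, 1 <= x -> 0 <= G x <= B) ->
  nng_bounded (fun s : m.+1.-tuple Y => (tnth s i == y)%:R * G (wsum s)).
Proof.
move=> B0 GB; exists B => // s.
have /GB/andP[G0 GB'] : 1 <= wsum s by apply: le_trans (wsum_ge s); rewrite ler1n.
by case: (tnth s i == y) => /=; rewrite ?mul1r ?mul0r ?G0 ?GB' ?lexx.
Qed.

Lemma expect_tnth0_eq m (G : R -> R) B : 0 <= B -> (forall x, 1 <= x -> 0 <= G x <= B) ->
  expect (prod_pmf p m.+1) (fun s => (tnth s ord0 == y)%:R * G (wsum s)) =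
  p y * expect (prod_pmf p m) (fun s => G (w y + wsum s)).
Proof.
move=> B0 GB; have d := prod_pmf_distr p_distr m.
rewrite (expect_prod_pmf_cons p_distr (nng_bounded_tnth_eq _ B0 GB)).
rewrite (@eq_expect _ _ _ _
  (fun t => (t == y)%:R * expect (prod_pmf p m) (fun s => G (w t + wsum s)))); last first.
  move=> t; have i0 : 0 <= (t == y)%:R :> R by case: (t == y).
  rewrite -(expectZl d i0 (nng_bounded_comp_wsum _ B0 GB (w_ge1 t))).
  by apply: eq_expect => s; rewrite tnth0 wsum_cons.
rewrite expect_indicator //; apply: (nng_bounded_expect d B0) => t s.
by apply: GB; rewrite -[1]addr0 lerD // wsum_ge0.
Qed.

Lemma expect_tnth_eq m (i : 'I_m.+1) (G : R -> R) B : 0 <= B ->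
  (forall x, 1 <= x -> 0 <= G x <= B) ->
  expect (prod_pmf p m.+1) (fun s => (tnth s i == y)%:R * G (wsum s)) =
  p y * expect (prod_pmf p m) (fun s => G (w y + wsum s)).
Proof.
elim: m i G => [|m IH] i G B0 GB; case: (unliftP ord0 i) => [j ->|->];
  try exact: (expect_tnth0_eq _ B0 GB); first by case: j.
have d := prod_pmf_distr p_distr m.
have GBt t x : 1 <= x -> 0 <= G (w t + x) <= B.
  by move=> x1; apply: GB; rewrite -[1]add0r lerD // (le_trans _ (w_ge1 t)).
have GBty t (s : m.-tuple Y) : 0 <= G (w t + (w y + wsum s)) <= B.
  by apply: GBt; rewrite -[1]addr0 lerD // wsum_ge0.
rewrite (expect_prod_pmf_cons p_distr (nng_bounded_tnth_eq _ B0 GB)).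
rewrite (@eq_expect _ _ _ _
  (fun t => p y * expect (prod_pmf p m) (fun s => G (w t + (w y + wsum s))))); last first.
  move=> t; rewrite -(IH j (fun x => G (w t + x)) B0 (GBt t)).
  by apply: eq_expect => s; rewrite tnthS wsum_cons.
rewrite (expectZl p_distr (p_distr.1 y) (nng_bounded_expect d B0 GBty)); congr (_ * _).
rewrite (expect_prod_pmf_cons p_distr (nng_bounded_comp_wsum _ B0 GB (w_ge1 y))).
by apply: eq_expect => t; apply: eq_expect => s; rewrite wsum_cons addrCA.
Qed.

Lemma nng_bounded_inv_shift m : nng_bounded (fun s : m.-tuple Y => 1 / (w y + wsum s)).
Proof. exact: (nng_bounded_comp_wsum m ler01 (divr_ge1_bounds ler01) (w_ge1 y)). Qed.

Lemma smc_pmfE m : smc_pmf m.+1 y = m.+1%:R * (p y * (w y * mean_inv m)).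
Proof.
have wy0 := w_ge0 y; have Gb := divr_ge1_bounds wy0.
rewrite /smc_pmf /smc_weight (@eq_expect _ _ _ _
  (fun s => \sum_(i < m.+1) (tnth s i == y)%:R * (w y / wsum s))); last first.
  move=> s; rewrite mulr_suml; apply: eq_bigr => i _.
  by case: eqP => [->|_]; rewrite ?mul0r ?mul1r.
rewrite (expect_sum (prod_pmf_distr p_distr m.+1)) => [|i]; last exact: nng_bounded_tnth_eq wy0 Gb.
under eq_bigr do rewrite (expect_tnth_eq _ wy0 Gb).
rewrite sumr_const card_ord mulr_natl; congr (_ *+ _); congr (_ * _).
rewrite -(expectZl (prod_pmf_distr p_distr m) wy0 (nng_bounded_inv_shift m)).
by apply: eq_expect => s; rewrite mul1r.
Qed.

Let shift_gt0 m : 0 < w y + m%:R * wmean.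
Proof. by rewrite ltr_pwDl ?mulr_ge0 ?wmean_ge0 // (lt_le_trans ltr01 (w_ge1 y)). Qed.

Let nng_bounded_shift m : nng_bounded (fun s : m.-tuple Y => w y + wsum s).
Proof. exact: nng_boundedD (nng_bounded_cst _ (w_ge0 y)) (nng_bounded_wsum m). Qed.

Lemma mean_inv_tangentE m : expect (prod_pmf p m)
    (fun s => 1 / (w y + wsum s) + ((w y + m%:R * wmean) ^+ 2)^-1 * (w y + wsum s)) =
  mean_inv m + 1 / (w y + m%:R * wmean).
Proof.
have d := prod_pmf_distr p_distr m.
set a := w y + m%:R * wmean; have a0 : 0 < a := shift_gt0 m.
have ia0 : 0 <= (a ^+ 2)^-1 by rewrite invr_ge0 sqr_ge0.
rewrite (expectD d (nng_bounded_inv_shift m) (nng_boundedZl ia0 (nng_bounded_shift m))).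
rewrite (expectZl d ia0 (nng_bounded_shift m)).
rewrite (expectD d (nng_bounded_cst _ (w_ge0 y)) (nng_bounded_wsum m)) expect_cst //.
rewrite expect_wsum -/a -/(mean_inv m); congr (_ + _).
by field; rewrite gt_eqF.
Qed.

Lemma mean_inv_ge m : 1 / (w y + m%:R * wmean) <= mean_inv m.
Proof.
have d := prod_pmf_distr p_distr m.
set a := w y + m%:R * wmean; have a0 : 0 < a := shift_gt0 m.
have ia0 : 0 <= (a ^+ 2)^-1 by rewrite invr_ge0 sqr_ge0.
have h2a : 0 <= 2 / a by rewrite divr_ge0 ?ltW.
have : 2 / a <= mean_inv m + 1 / a.
  rewrite -mean_inv_tangentE -[leLHS](expect_cst d h2a).
  apply: (le_expect d (nng_bounded_cst _ h2a)
    (nng_boundedD (nng_bounded_inv_shift m) (nng_boundedZl ia0 (nng_bounded_shift m)))) => s.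
  apply: inv_tangent_lb => //; apply: (lt_le_trans (lt_le_trans ltr01 (w_ge1 y))).
  by rewrite lerDl wsum_ge0.
have -> : 2 / a = 1 / a + 1 / a by field; rewrite gt_eqF.
by rewrite lerD2r.
Qed.

Lemma mean_inv_le m : mean_inv m <= 1 / (w y + m%:R * wmean) +
   m%:R * (wmean2 - wmean ^+ 2) / ((w y + m%:R * wmean) ^+ 2 * (w y + m%:R)).
Proof.
have d := prod_pmf_distr p_distr m.
set a := w y + m%:R * wmean; have a0 : 0 < a := shift_gt0 m.
set L := w y + m%:R.
have L0 : 0 < L by rewrite /L ltr_pwDl // (lt_le_trans ltr01 (w_ge1 y)).
have ia0 : 0 <= (a ^+ 2)^-1 by rewrite invr_ge0 sqr_ge0.
have c0 : 0 <= (a ^+ 2)^-1 / L := divr_ge0 ia0 (ltW L0).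
have h2a : 0 <= 2 / a by rewrite divr_ge0 ?ltW.
have bV := nng_bounded_wsum_centered2 m.
have : mean_inv m + 1 / a <= 2 / a + ((a ^+ 2)^-1 / L) * (m%:R * wmean2 - m%:R * wmean ^+ 2).
  rewrite -mean_inv_tangentE -expect_wsum_centered2 -(expectZl d c0 bV) -(expect_cst d h2a).
  rewrite -(expectD d (nng_bounded_cst _ h2a) (nng_boundedZl c0 bV)).
  apply: (le_expect d
    (nng_boundedD (nng_bounded_inv_shift m) (nng_boundedZl ia0 (nng_bounded_shift m)))
    (nng_boundedD (nng_bounded_cst _ h2a) (nng_boundedZl c0 bV))) => s.
  have -> : wsum s - m%:R * wmean = (w y + wsum s) - a by rewrite /a; ring.
  by apply: inv_tangent_ub => //; rewrite /L lerD2l; exact: wsum_ge.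
have -> : 2 / a + (a ^+ 2)^-1 / L * (m%:R * wmean2 - m%:R * wmean ^+ 2) =
    1 / a + m%:R * (wmean2 - wmean ^+ 2) / (a ^+ 2 * L) + 1 / a.
  by field; rewrite !gt_eqF.
by rewrite lerD2r.
Qed.

Lemma smc_ratio_bounds m :
  1 - M / m.+1%:R <= m.+1%:R * wmean * mean_inv m <= 1 + 3 * M / m.+1%:R.
Proof.
have wyM : 1 <= w y <= M by rewrite w_ge1 w_leM.
have ZM : 1 <= wmean <= M by rewrite wmean_ge1 wmean_leM.
rewrite -natr1; apply/andP; split.
  exact: (scaled_inv_lb (ler0n _ m) wyM ZM (mean_inv_ge m)).
exact: (scaled_inv_ub wyM ZM wmean2_le (mean_inv_le m)).
Qed.

End FixedOutcome.

Lemma wsum_gt0 m (s : m.+1.-tuple Y) : 0 < wsum s.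
Proof. by apply: lt_le_trans (wsum_ge s); rewrite ltr0n. Qed.

Lemma nng_bounded_smc_weight m y : nng_bounded (@smc_weight m.+1 y).
Proof.
exists 1 => // s; have S0 := wsum_gt0 s; rewrite /smc_weight.
have num0 : 0 <= \sum_(i < m.+1) (tnth s i == y)%:R * w (tnth s i).
  by apply: sumr_ge0 => i _; rewrite mulr_ge0 //; case: (_ == _).
rewrite divr_ge0 ?(ltW S0) //= ler_pdivrMr // mul1r; apply: ler_sum => i _.
by case: (_ == _); rewrite ?mul1r ?mul0r.
Qed.

Lemma esum_smc_weight m (s : m.+1.-tuple Y) :
  (\esum_(y in [set: Y]) (smc_weight y s)%:E = 1)%E.
Proof.
have c0 i : 0 <= w (tnth s i) / wsum s := divr_ge0 (w_ge0 _) (ltW (wsum_gt0 s)).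
under eq_esum do rewrite /smc_weight mulr_suml -sumEFin.
rewrite esum_sum; last first.
  by move=> y i _ _; rewrite lee_fin -mulrA mulr_ge0 //; case: (_ == y).
under eq_bigr do under eq_esum do rewrite -mulrA.
under eq_bigr do rewrite esum_eq_mul //.
by rewrite sumEFin -mulr_suml divff // gt_eqF // wsum_gt0.
Qed.

Lemma smc_pmf_sum1 m : (\esum_(y in [set: Y]) (smc_pmf m.+1 y)%:E = 1)%E.
Proof.
have d := prod_pmf_distr p_distr m.+1.
have Pw0 y s : (0 <= (prod_pmf p m.+1 s * smc_weight y s)%:E)%E.
  by rewrite lee_fin mulr_ge0 ?prod_pmf_ge0 ?(nng_bounded_ge0 (nng_bounded_smc_weight m y)).
under eq_esum do rewrite /smc_pmf -(eexpectE d (nng_bounded_smc_weight m _)).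
rewrite (esum_esum (a := fun y s => (prod_pmf p m.+1 s * smc_weight y s)%:E)) //.
rewrite (reindex_esum ([set: m.+1.-tuple Y] `*`` (fun _ => [set: Y])) _ (fun z => (z.2, z.1))).
  rewrite /= -(esum_esum (a := fun s y => (prod_pmf p m.+1 s * smc_weight y s)%:E)) //.
  rewrite -[RHS]d.2; apply: eq_esum => s _.
  by rewrite esumZl ?prod_pmf_ge0 // esum_smc_weight mule1.
by split => [[s y] _ | [s y] [s' y'] _ _ [-> ->] | [y s] _] //; exists (s, y).
Qed.

End Weights.

Section KLDivergence.
Variables (R : realType) (Y : choiceType).

Definition chi2 (q p : Y -> R) : \bar R :=
  (\esum_(y in [set: Y]) ((q y - p y) ^+ 2 / p y)%:E)%E.

Lemma mul_ln_div_bounds (a b : R) : 0 <= a -> 0 < b ->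
  a - b <= a * ln (a / b) <= a - b + (a - b) ^+ 2 / b.
Proof.
move=> a0 b0; have [->|an0] := eqVneq a 0.
  rewrite mul0r !add0r oppr_le0 ltW //=.
  by rewrite (_ : (- b) ^+ 2 / b = b) ?addNr //; field; rewrite gt_eqF.
have ap : 0 < a by rewrite lt_neqAle eq_sym an0.
set g := a / b; have g0 : 0 < g by rewrite divr_gt0.
have gi0 : 0 < g^-1 by rewrite invr_gt0.
have lnV_le : - ln g <= g^-1 - 1.
  by rewrite -lnV ?posrE // -[X in ln X](subrK 1 g^-1) addrC le_ln1Dx //; lra.
have ln_le : ln g <= g - 1 by rewrite -[X in ln X](subrK 1 g) addrC le_ln1Dx //; lra.
apply/andP; split.
  have -> : a - b = a * (1 - g^-1) by rewrite /g; field; rewrite !gt_eqF.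
  by apply: ler_wpM2l => //; lra.
have -> : a - b + (a - b) ^+ 2 / b = a * (g - 1) by rewrite /g; field; rewrite gt_eqF.
exact: ler_wpM2l.
Qed.

Lemma max0_sub (x : R) : Num.max x 0 = Num.max (- x) 0 + x.
Proof. by rewrite !maxEle; case: (lerP x 0) => h; case: (lerP (- x) 0) => h'; lra. Qed.

Lemma esum_pos_part_subC (q p : Y -> R) : is_distr q -> is_distr p ->
  (\esum_(y in [set: Y]) (Num.max (q y - p y) 0)%:E =
   \esum_(y in [set: Y]) (Num.max (p y - q y) 0)%:E)%E.
Proof.
move=> [q0 q1] [p0 p1].
have pos0 (u v : Y -> R) y : (0 <= (Num.max (u y - v y) 0)%:E)%E.
  by rewrite lee_fin le_max lexx orbT.
have fin (u v : Y -> R) : (forall y, 0 <= u y) -> (forall y, 0 <= v y) ->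
    (\esum_(y in [set: Y]) (u y)%:E = 1)%E ->
    (\esum_(y in [set: Y]) (Num.max (u y - v y) 0)%:E)%E \is a fin_num.
  move=> u0 v0 u1; rewrite ge0_fin_numE ?esum_ge0 // (@le_lt_trans _ _ 1%E) ?ltry // -u1.
  by apply: le_esum => y _; rewrite lee_fin ge_max u0 andbT lerBlDr lerDl.
rewrite -(fineK (fin _ _ q0 p0 q1)) -(fineK (fin _ _ p0 q0 p1)); congr EFin.
apply: (addIr 1); apply: EFin_inj; rewrite !EFinD !fineK ?fin //.
rewrite -[in LHS]p1 -q1 -!esumD //; last 2 first.
- by move=> y _; rewrite lee_fin.
- by move=> y _; rewrite lee_fin.
by apply: eq_esum => y _; rewrite max0_sub opprB -!EFinD; congr EFin; ring.
Qed.

(* The positive and negative parts of q ln (q/p) are bounded separately, since the integrand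
   need not be summable a priori; this costs the factor 2. *)
Lemma KL_le_chi2 (q p : Y -> R) : is_distr q -> is_distr p -> (forall y, 0 < p y) ->
  (KL q p <= 2%:E * chi2 q p)%E.
Proof.
move=> qd pd p_gt0; have [q0 _] := qd.
set t := fun y => q y * ln (q y / p y).
set e := fun y => (q y - p y) ^+ 2 / p y.
have e0 y : 0 <= e y by rewrite /e divr_ge0 ?sqr_ge0 ?ltW.
have tb y := mul_ln_div_bounds (q0 y) (p_gt0 y).
have max0_ge0 (x : R) : 0 <= Num.max x 0 by rewrite le_max lexx orbT.
have : (0 <= chi2 q p)%E by apply: esum_ge0 => y _; rewrite lee_fin; exact: e0.
case E : (chi2 q p) => [c| |] // c0; last by rewrite gt0_muley ?leey.
set Pd := (\esum_(y in [set: Y]) (Num.max (q y - p y) 0)%:E)%E.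
have Pd_fin : Pd \is a fin_num.
  rewrite ge0_fin_numE ?esum_ge0 // => [|y _]; last by rewrite lee_fin.
  apply: (@le_lt_trans _ _ 1%E); last exact: ltry.
  rewrite -qd.2; apply: le_esum => y _.
  by rewrite lee_fin ge_max q0 andbT lerBlDr lerDl ltW.
have tpos_le : (\esum_(y in [set: Y]) (Num.max (t y) 0)%:E <= Pd + c%:E)%E.
  rewrite -E /Pd /chi2 -esumD; last 2 first.
  - by move=> z _; rewrite lee_fin.
  - by move=> z _; rewrite lee_fin; exact: e0.
  apply: le_esum => y _; rewrite lee_fin ge_max.
  apply/andP; split; last exact: (addr_ge0 (max0_ge0 _) (e0 y)).
  by case/andP: (tb y) => _ /le_trans; apply; rewrite lerD2r le_max lexx.
have tneg_ge : (Pd - c%:E <= \esum_(y in [set: Y]) (Num.max (- t y) 0)%:E)%E.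
  rewrite leeBlDr // -E /Pd esum_pos_part_subC // /chi2 -esumD; last 2 first.
  - by move=> z _; rewrite lee_fin.
  - by move=> z _; rewrite lee_fin; exact: e0.
  apply: le_esum => y _; rewrite lee_fin ge_max.
  apply/andP; split; last exact: (addr_ge0 (max0_ge0 _) (e0 y)).
  case/andP: (tb y) => _ ub; apply: (@le_trans _ _ (- t y + e y)); first by rewrite /e /t; lra.
  by rewrite lerD2r le_max lexx.
apply: (le_trans (leeB tpos_le tneg_ge)).
by rewrite -(fineK Pd_fin) /= lee_fin; lra.
Qed.

End KLDivergence.

Section PoissonAverage.
Variable R : realType.

Lemma exp_partial_sum_le (x : R) K : 0 <= x -> \sum_(0 <= j < K) x ^+ j / j`!%:R <= expR x.
Proof.
move=> x0; rewrite /expR.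
apply: (nondecreasing_cvgn_le _ (is_cvg_series_exp_coeff x) K) => a b ab.
rewrite /series /= (@big_cat_nat _ _ _ a 0 b) //= lerDl.
by apply: sumr_ge0 => i _; rewrite /exp_coeff /= divr_ge0 ?exprn_ge0.
Qed.

Lemma inv_sqr_le (i : nat) : (0 < i)%N -> 1 / i%:R ^+ 2 <= 6 / (i.+1%:R * i.+2%:R) :> R.
Proof.
move=> i0; have ir : 1 <= i%:R :> R by rewrite ler1n.
rewrite -!natr1 -addrA ler_pdivrMr ?exprn_gt0 ?(lt_le_trans ltr01 ir) //.
rewrite mulrAC ler_pdivlMr; last by apply: mulr_gt0; lra.
nra.
Qed.

Lemma poi_pos_ge0 (n N : nat) : (0 < n)%N -> 0 <= poi_pos R n N.
Proof.
move=> n0; have : expR (- n%:R) < 1 :> R by rewrite expR_lt1 oppr_lt0 ltr0n.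
by rewrite /poi_pos => ?; rewrite !divr_ge0 ?mulr_ge0 ?expR_ge0 ?exprn_ge0 //; lra.
Qed.

Lemma poi_pos_inv_sqr_le (n i : nat) (C : R) : (0 < n)%N -> (0 < i)%N -> 0 <= C ->
  poi_pos R n i * (C / i%:R ^+ 2) <=
  6 * C * expR (- n%:R) / (n%:R ^+ 2 * (1 - expR (- n%:R))) * (n%:R ^+ i.+2 / i.+2`!%:R).
Proof.
move=> n0 i0 C0; set x : R := n%:R; set e := expR (- x); set D := 1 - e.
have x0 : 0 < x by rewrite ltr0n.
have D0 : 0 < D by rewrite /D subr_gt0 expR_lt1 oppr_lt0.
have fi : 0 < i`!%:R :> R by rewrite ltr0n fact_gt0.
have ir : 0 < i%:R :> R by rewrite ltr0n.
set F := C * e * x ^+ i / (i`!%:R * D).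
have F0 : 0 <= F.
  apply: divr_ge0; last by rewrite mulr_ge0 ?ltW.
  by rewrite !mulr_ge0 ?expR_ge0 // exprn_ge0 // ltW.
have -> : poi_pos R n i * (C / i%:R ^+ 2) = F * (1 / i%:R ^+ 2).
  by rewrite /poi_pos /F -/x -/e -/D; field; rewrite !gt_eqF.
have -> : 6 * C * e / (x ^+ 2 * D) * (x ^+ i.+2 / i.+2`!%:R) =
    F * (6 / (i.+1%:R * i.+2%:R)).
  rewrite /F !factS !natrM !exprS; field.
  by rewrite !gt_eqF // -?natr1 ?ltr0n; lra.
by rewrite ler_wpM2l // inv_sqr_le.
Qed.

Lemma poi_pos_inv_sqr_sum_le (n : nat) (C : R) K : (3 <= n)%N -> 0 <= C ->
  \sum_(0 <= i < K | (0 < i)%N) poi_pos R n i * (C / i%:R ^+ 2) <= 12 * C / n%:R ^+ 2.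
Proof.
move=> n3 C0; have n0 : (0 < n)%N by apply: leq_trans n3.
set x : R := n%:R; set e := expR (- x); set D := 1 - e.
have x0 : 0 < x by rewrite ltr0n.
have ex2 : 2 <= expR x.
  apply: le_trans (expR_ge1Dx x); have : 3%:R <= x :> R by rewrite ler_nat.
  lra.
have e_le : e <= 1 / 2 by rewrite /e expRN -div1r; apply: ler_pdiv_cross; lra.
have D0 : 0 < D by rewrite /D; lra.
set Kc := 6 * C * e / (x ^+ 2 * D).
have Kc0 : 0 <= Kc.
  apply: divr_ge0; last by rewrite mulr_ge0 ?exprn_ge0 ?ltW.
  by rewrite !mulr_ge0 ?expR_ge0 ?ler0n.
have f0 j : 0 <= x ^+ j / j`!%:R by rewrite divr_ge0 ?exprn_ge0 ?ltW.
rewrite big_mkcond /=.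
apply: (@le_trans _ _ (\sum_(0 <= i < K) Kc * (x ^+ i.+2 / i.+2`!%:R))).
  apply: ler_sum => i _; case: ifP => i0; first exact: poi_pos_inv_sqr_le.
  by rewrite mulr_ge0.
rewrite -mulr_sumr; apply: (@le_trans _ _ (Kc * expR x)).
  apply: ler_wpM2l => //; apply: (le_trans _ (exp_partial_sum_le K.+2 (ltW x0))).
  rewrite (@big_cat_nat _ _ _ 2 0 K.+2) //= big_add1 big_add1 /= lerDr.
  exact: sumr_ge0.
have -> : Kc * expR x = 6 * C / (x ^+ 2 * D).
  by rewrite /Kc /e expRN; field; rewrite !gt_eqF ?expR_gt0.
apply: ler_pdiv_cross; rewrite ?mulr_gt0 ?exprn_gt0 //.
rewrite (_ : 12 * C * (x ^+ 2 * D) = (6 * C * x ^+ 2) * (2 * D)); last by ring.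
rewrite -[leLHS]mulr1; apply: ler_wpM2l; last by rewrite /D; lra.
by rewrite mulr_ge0 ?sqr_ge0 ?mulr_ge0.
Qed.

End PoissonAverage.

Section TiltedChi2.
Variables (R : realType) (Y : choiceType) (p w : Y -> R) (M : R).
Hypothesis p_distr : is_distr p.
Hypothesis p_gt0 : forall y, 0 < p y.
Hypothesis w_ge1 : forall t, 1 <= w t.
Hypothesis w_leM : forall t, w t <= M.

Definition tilt (y : Y) : R := p y * w y / wmean p w.

Let wmean_gt0 : 0 < wmean p w.
Proof. exact: lt_le_trans ltr01 (wmean_ge1 p_distr w_ge1 w_leM). Qed.

Let w_gt0 t : 0 < w t. Proof. exact: lt_le_trans ltr01 (w_ge1 t). Qed.

Lemma tilt_gt0 y : 0 < tilt y.
Proof. by rewrite divr_gt0 ?mulr_gt0. Qed.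

Lemma tilt_distr : is_distr tilt.
Proof.
split => [y|]; first exact: ltW (tilt_gt0 y).
rewrite /tilt; under eq_esum do rewrite mulrC.
rewrite esumZl ?invr_ge0 ?ltW // -/(eexpect p w).
by rewrite (eexpectE p_distr (nng_bounded_w p_distr w_ge1 w_leM)) -EFinM mulVf // gt_eqF.
Qed.

Lemma smc_pmf_distr m : is_distr (smc_pmf p w m.+1).
Proof.
split; last exact: smc_pmf_sum1 p_distr w_ge1 m.
move=> y; exact: (expect_ge0 (prod_pmf_distr p_distr m.+1)
                             (nng_bounded_smc_weight w_ge1 m y)).
Qed.

Lemma chi2_smc_le m : (chi2 (smc_pmf p w m.+1) tilt <= (9 * M ^+ 2 / m.+1%:R ^+ 2)%:E)%E.
Proof.
set N : R := m.+1%:R; have N0 : 0 < N by rewrite ltr0n.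
have M0 : 0 <= M := le_trans (ltW wmean_gt0) (wmean_leM p_distr w_ge1 w_leM).
have MN0 : 0 <= M / N := divr_ge0 M0 (ltW N0).
set B := 9 * M ^+ 2 / N ^+ 2.
apply: (@le_trans _ _ (\esum_(y in [set: Y]) (B * tilt y)%:E)%E); last first.
  by rewrite esumZl ?tilt_distr.2 ?mule1 // /B divr_ge0 ?mulr_ge0 ?sqr_ge0.
apply: le_esum => y _; rewrite lee_fin smc_pmfE // -/N.
have := smc_ratio_bounds p_distr w_ge1 w_leM y m; rewrite -/N.
set g := N * wmean p w * mean_inv p w y m => /andP[g_lb g_ub].
have -> : (N * (p y * (w y * mean_inv p w y m)) - tilt y) ^+ 2 / tilt y = (g - 1) ^+ 2 * tilt y.
  by rewrite /g /tilt; field; rewrite !gt_eqF.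
rewrite ler_pM2r ?tilt_gt0 // /B.
have -> : 9 * M ^+ 2 / N ^+ 2 = (3 * (M / N)) ^+ 2 by field; rewrite gt_eqF.
rewrite -mulrA in g_ub; move: g_lb g_ub MN0; set a := M / N => g_lb g_ub a0.
have h3 : 0 <= 3 * a - (g - 1) by lra.
have h4 : 0 <= 3 * a + (g - 1) by lra.
by have := mulr_ge0 h3 h4; nra.
Qed.

Lemma KL_smc_le m : (KL (smc_pmf p w m.+1) tilt <= (18 * M ^+ 2 / m.+1%:R ^+ 2)%:E)%E.
Proof.
apply: le_trans (KL_le_chi2 (smc_pmf_distr m) tilt_distr tilt_gt0) _.
rewrite (_ : 18 * _ / _ = 2 * (9 * M ^+ 2 / m.+1%:R ^+ 2)); last by ring.
by rewrite EFinM lee_wpmul2l ?lee_fin // chi2_smc_le.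
Qed.

End TiltedChi2.

Section SMCPolicies.
Variable R : realType.

Lemma smc_out_targetE (X Y : choiceType) (pit r : X -> Y -> R) beta N x :
  (forall y, 0 < pit x y) ->
  smc_out pit pit r beta N x = smc_pmf (pit x) (fun y => expR (beta * r x y)) N.
Proof.
move=> pit_gt0; have phiE t : phi pit pit r beta x t = expR (beta * r x t).
  by rewrite /phi divff ?mul1r // gt_eqF.
apply/funext => y; rewrite /smc_out /esumR /smc_pmf /expect /eexpect /smc_weight /wsum.
congr fine; apply: eq_esum => s _; congr (EFin (_ * (_ / _))).
  by apply: eq_bigr => i _; rewrite phiE.
by apply: eq_bigr => i _; rewrite phiE.
Qed.

Lemma KLcond_smc_le (X Y : choiceType) (rho : X -> R) (pit r : X -> Y -> R) (Rmax beta : R) m :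
  is_distr rho -> (forall x, is_distr (pit x)) -> (forall x y, 0 < pit x y) ->
  (forall x y, 0 <= r x y <= Rmax) -> 0 < beta ->
  (KLcond rho (smc_out pit pit r beta m.+1) (tilted pit r beta) <=
     (18 * expR (beta * Rmax) ^+ 2 / m.+1%:R ^+ 2)%:E)%E.
Proof.
move=> [rho0 rho1] pit_distr pit_gt0 r_bnd beta_gt0.
set B := 18 * expR (beta * Rmax) ^+ 2 / m.+1%:R ^+ 2.
have B0 : 0 <= B by rewrite /B !(mulr_ge0, divr_ge0, sqr_ge0).
apply: (@le_trans _ _ (\esum_(x in [set: X]) (B * rho x)%:E)%E); last first.
  by rewrite esumZl // rho1 mule1.
apply: le_esum => x _; rewrite mulrC EFinM lee_wpmul2l ?lee_fin // smc_out_targetE //.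
have w_ge1 y : 1 <= expR (beta * r x y).
  rewrite -expR0 ler_expR; case/andP: (r_bnd x y) => r0 _.
  exact: mulr_ge0 (ltW beta_gt0) r0.
have w_leM y : expR (beta * r x y) <= expR (beta * Rmax).
  by rewrite ler_expR ler_pM2l //; case/andP: (r_bnd x y).
(* [tilted pit r beta x] is convertible to [tilt (pit x) (fun y => expR (beta * r x y))]. *)
exact: (KL_smc_le (pit_distr x) (pit_gt0 x) w_ge1 w_leM m).
Qed.

Lemma poi_KL_le (X Y : choiceType) (rho : X -> R) (pit r : X -> Y -> R) beta n (C : R) :
  (3 <= n)%N -> 0 <= C ->
  (forall N, (0 < N)%N -> (KLcond rho (smc_out pit pit r beta N) (tilted pit r beta)
                           <= (C / N%:R ^+ 2)%:E)%E) ->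
  (poi_KL rho pit pit r beta n <= (12 * C / n%:R ^+ 2)%:E)%E.
Proof.
move=> n3 C0 KL_le; have n0 : (0 < n)%N by apply: leq_trans n3.
have term_ge0 N : (0 <= (poi_pos R n N * (C / N%:R ^+ 2))%:E)%E.
  by rewrite lee_fin mulr_ge0 ?poi_pos_ge0 ?divr_ge0 ?sqr_ge0.
apply: (@le_trans _ _ (\esum_(N in [set N | (0 < N)%N]) (poi_pos R n N * (C / N%:R ^+ 2))%:E)%E).
  apply: le_esum => N N0; rewrite (EFinM (poi_pos R n N)); apply: lee_wpmul2l; last exact: KL_le.
  by rewrite lee_fin poi_pos_ge0.
rewrite -nneseries_esum //; apply: lime_le; first exact: is_cvg_nneseries_cond.
by apply: nearW => K; rewrite sumEFin lee_fin poi_pos_inv_sqr_sum_le.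
Qed.

End SMCPolicies.

Theorem corollaryB8 (R : realType) :
  exists (C : R) (k : nat), 0 < C /\
  forall (X Y : choiceType) (rho : X -> R) (pit pig : X -> Y -> R)
         (r : X -> Y -> R) (Rmax beta : R),
    is_distr rho ->
    (forall x, is_distr (pit x)) ->
    (forall x y, 0 < pit x y) ->
    pig = pit ->
    (forall x y, 0 <= r x y <= Rmax) ->
    0 < beta ->
    forall n : nat, (3 <= n)%N ->
      (poi_KL rho pit pig r beta n
         <= (C * expR (2 * beta * Rmax) * ln (n%:R : R) ^+ k / (n%:R ^+ 2))%:E)%E
   /\ (KLcond rho (smc_out pit pig r beta n) (tilted pit r beta)
         <= (C * expR (2 * beta * Rmax) * ln (n%:R : R) ^+ k
             / (n%:R `^ (3 / 2)))%:E)%E.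
Proof.
exists 216, 0%N; split=> //.
move=> X Y rho pit _ r Rmax beta rho_distr pit_distr pit_gt0 -> r_bnd beta_gt0 n n3.
have -> : expR (2 * beta * Rmax) = expR (beta * Rmax) ^+ 2 by rewrite -mulrA expRM_natl.
rewrite expr0 mulr1; set M2 := expR (beta * Rmax) ^+ 2.
have M2_ge0 : 0 <= M2 by rewrite sqr_ge0.
have KL_le m := KLcond_smc_le m rho_distr pit_distr pit_gt0 r_bnd beta_gt0.
split.
  rewrite (_ : 216 * M2 = 12 * (18 * M2)); last by ring.
  apply: poi_KL_le; rewrite ?mulr_ge0 // => -[|m] // _; rewrite mulrA; exact: KL_le.
case: n n3 => [//|m] _; apply: le_trans (KL_le m) _; rewrite lee_fin.
have N1 : 1 <= m.+1%:R :> R by rewrite ler1n.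
have pow_le : m.+1%:R `^ (3 / 2) <= m.+1%:R ^+ 2 :> R.
  by rewrite -powR_mulrn; [apply: ler_powR => //; lra | lra].
have pow_gt0 : 0 < m.+1%:R `^ (3 / 2) :> R by apply: powR_gt0; lra.
apply: ler_pdiv_cross => //.
apply: ler_pM => //; rewrite -/M2.
by apply: ler_wpM2r => //; lra.
Qed.
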